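(* Let $R$ be a fixed $R$-transform and, for $t \ge 0$, set $R(t,z) \coloneqq R(z e^{t})$. Let $m(t,z)$ denote the Stieltjes transform whose $R$-transform is $R(t,\cdot)$, and let $\omega(t,\cdot)$ denote its functional inverse (so that $m(t,\omega(t,z)) = z$), assumed differentiable in $(t,z)$. Then $m$ satisfies the partial differential equation \[ \frac{\partial m}{\partial t}(t,z) = -m(t,z) + \frac{1}{m(t,z)}\,\frac{\partial m}{\partial z}(t,z). \]
   Context: For a probability density $\rho$ on $\mathbb{R}$, its Stieltjes transform is $m(z) = \int_{\mathbb{R}} \frac{\rho(x)}{x-z}\,\mathrm{d}x$ for $z \in \mathbb{C}^{+} = \{\Im z > 0\}$. Letting $\omega$ denote the functional inverse of $m$ (i.e. $m(\omega(z)) = z$), the $R$-transform is $R(z) = \omega(-z) - z^{-1}$. Thus ''the Stieltjes transform corresponding to the $R$-transform $R(t,\cdot)$'' means the function $m(t,\cdot)$ with inverse $\omega(t,\cdot)$ satisfying $R(t,z) = \omega(t,-z) - z^{-1}$. *)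

From mathcomp Require Import all_boot all_algebra.
From mathcomp Require Import all_classical all_reals all_analysis.
From mathcomp Require Export complex.
Set Implicit Arguments. Unset Strict Implicit. Unset Printing Implicit Defensive.
Import GRing.Theory Num.Theory.
Local Open Scope ring_scope.
Local Open Scope complex_scope.

Section Defs.
Variable R : realType.

Definition is_prob_density (rho : R -> R) : Prop :=
  [/\ measurable_fun setT rho, (forall x, 0 <= rho x) &
      (\int[lebesgue_measure]_x (rho x)%:E = 1)%E].

(* Stieltjes transform m(z) = \int rho(x)/(x - z) dx, written via real and
   imaginary parts: 1/(x - z) = ((x - a) + i b)/((x - a)^2 + b^2), z = a + i b. *)
Definition stieltjes (rho : R -> R) (z : R[i]) : R[i] :=
  let a := complex.Re z in let b := complex.Im z in
  (Rintegral lebesgue_measure setT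
     (fun x => rho x * (x - a) / ((x - a) ^+ 2 + b ^+ 2)))%:C
  + 'i * (Rintegral lebesgue_measure setT
     (fun x => rho x * b / ((x - a) ^+ 2 + b ^+ 2)))%:C.

(* R-transform from the functional inverse om of m: R(z) = om(-z) - z^-1. *)
Definition Rtransform (om : R[i] -> R[i]) (z : R[i]) : R[i] := om (- z) - z^-1.

(* Joint (Frechet) differentiability of f : [0,oo) x C -> C at (t,z), with
   partial derivative a in t (one-sided at t = 0) and complex partial
   derivative b in z. *)
Definition jdiff (f : R -> R[i] -> R[i]) (t : R) (z a b : R[i]) : Prop :=
  forall e : R, 0 < e -> exists d : R, 0 < d /\
    forall (s : R) (w : R[i]), 0 <= s -> `|s - t| < d -> `|w - z| < d%:C ->
      `|f s w - f t z - a * (s - t)%:C - b * (w - z)|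
        <= e%:C * ((`|s - t|)%:C + `|w - z|).

Definition is_dt (f : R -> R[i] -> R[i]) (t : R) (z a : R[i]) : Prop :=
  forall e : R, 0 < e -> exists d : R, 0 < d /\
    forall s : R, 0 <= s -> `|s - t| < d ->
      `|f s z - f t z - a * (s - t)%:C| <= e%:C * (`|s - t|)%:C.

Definition is_dz (f : R -> R[i] -> R[i]) (t : R) (z b : R[i]) : Prop :=
  forall e : R, 0 < e -> exists d : R, 0 < d /\
    forall w : R[i], `|w - z| < d%:C ->
      `|f t w - f t z - b * (w - z)| <= e%:C * `|w - z|.

End Defs.

(* Write z = omega(t, w), so that m(t, z) = w.  Differentiating the identity
   m(s, omega(s, w')) = w' in s and in w' gives m_t + m_z omega_t = 0 and
   m_z omega_z = 1.  The R-transform hypothesis says omega(s, w') = R(-w' e^s) - 1/w',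
   so along the curve (s, w') = (t + h, w e^-h) the argument of R does not move and
   omega_t - w omega_z = -1/w.  Eliminating omega_t and omega_z yields
   m_t = -w + m_z / w.  Every derivative is computed as the right derivative at
   h = 0 of a curve h |-> f(t + h sigma, c(h)), through a chain rule for jointly
   differentiable f; and w <> 0 because Im m > 0 for a probability density. *)

From mathcomp Require Import all_boot all_algebra.
From mathcomp Require Import all_classical all_reals all_analysis.
From mathcomp Require Import complex.
From mathcomp Require Import ring lra measurable_realfun.
Import order.Order.TTheory GRing.Theory Num.Theory ComplexField.Normc.
Import numFieldNormedType.Exports.
Local Open Scope ring_scope.
Local Open Scope complex_scope.
Local Open Scope classical_set_scope.

Section ComplexNorm.
Context {R : rcfType}.
Implicit Types z : R[i].

Lemma normcE z : `|z| = (normc z)%:C.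
Proof. by case: z => a b; rewrite normc_def. Qed.

Lemma normc_ge0 z : 0 <= normc z.
Proof. by rewrite -ler0c -normcE. Qed.

Lemma normc_real (r : R) : normc r%:C = `|r|.
Proof. by rewrite /normc /= expr0n addr0 sqrtr_sqr. Qed.

Lemma lec_normc z (r : R) : (`|z| <= r%:C) = (normc z <= r).
Proof. by rewrite normcE lecR. Qed.

Lemma ltc_normc z (r : R) : (`|z| < r%:C) = (normc z < r).
Proof. by rewrite normcE ltcR. Qed.

End ComplexNorm.

Section RightDerivative.
Context {R : realType}.
Implicit Types (f : R -> R[i] -> R[i]) (g c : R -> R[i]) (L : R[i]).

(* One-sided in time, since the statement only allows [t >= 0]. *)
Definition is_rderive0 g L := forall e : R, 0 < e ->
  \forall h \near 0^'+, normc (g h - g 0 - h%:C * L) <= e * h.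

Lemma is_rderive0_unique {g L1 L2} : is_rderive0 g L1 -> is_rderive0 g L2 -> L1 = L2.
Proof.
move=> H1 H2; apply/eqP; rewrite -subr_eq0; apply/eqP/eq0_normc.
set r := normc (L1 - L2); apply/eqP; rewrite eq_le normc_ge0 andbT leNgt.
apply/negP => r0; have r4 : 0 < r / 4 by rewrite divr_gt0.
near (0 : R)^'+ => h.
have h0 : 0 < h by near: h; exact: nbhs_right_gt.
have : normc (h%:C * (L1 - L2)) <= r / 4 * h + r / 4 * h.
  have -> : h%:C * (L1 - L2) = - (g h - g 0 - h%:C * L1) + (g h - g 0 - h%:C * L2).
    by ring.
  apply: (le_trans (le_normcD _ _)); rewrite normcN lerD //.
  - by near: h; exact: H1.
  - by near: h; exact: H2.
rewrite normcM normc_real gtr0_norm // -/r; nra.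
Unshelve. all: by end_near. Qed.

Lemma is_rderive0_near_eq {g g' L} : (\forall h \near 0^'+, g' h = g h) ->
  g' 0 = g 0 -> is_rderive0 g L -> is_rderive0 g' L.
Proof.
move=> gg' g0 H e e0; near=> h.
by rewrite g0 (near gg'); [near: h; exact: H|].
Unshelve. all: by end_near. Qed.

Lemma is_rderive0_cst k : is_rderive0 (fun=> k) 0.
Proof.
move=> e e0; near=> h; rewrite mulr0 !subr0 subrr normc0 mulr_ge0 ?ltW //.
Unshelve. all: by end_near. Qed.

Lemma is_rderive0_line k v : is_rderive0 (fun h => k + h%:C * v) v.
Proof.
move=> e e0; near=> h.
by rewrite rmorph0 mul0r addr0 addrAC addrK subrr normc0 mulr_ge0 ?ltW.
Unshelve. all: by end_near. Qed.

Lemma is_rderive0_scale {g L} (a : R[i]) :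
  is_rderive0 g L -> is_rderive0 (fun h => a * g h) (a * L).
Proof.
move=> H e e0; set n := normc a.
have n1 : 0 < n + 1 by rewrite ltr_pwDr ?normc_ge0.
have ne : n * (e / (n + 1)) <= e.
  by rewrite mulrCA ler_piMr ?(ltW e0) // ler_pdivrMr // mul1r lerDl.
near=> h.
have B : normc (g h - g 0 - h%:C * L) <= e / (n + 1) * h.
  by near: h; apply: H; rewrite divr_gt0.
have h0 : 0 < h by near: h; exact: nbhs_right_gt.
have -> : a * g h - a * g 0 - h%:C * (a * L) = a * (g h - g 0 - h%:C * L) by ring.
rewrite normcM (le_trans (ler_wpM2l (normc_ge0 a) B)) // mulrA ler_pM2r.
Unshelve. all: by end_near. Qed.

Lemma is_rderive0_shift {g L} k : is_rderive0 g L -> is_rderive0 (fun h => g h + k) L.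
Proof.
move=> H e e0; near do rewrite opprD addrACA subrr addr0; exact: H.
Unshelve. all: by end_near. Qed.

Lemma is_rderive0_real {u : R -> R} {l : R} :
  is_derive (0 : R) 1 u l -> is_rderive0 (fun h => (u h)%:C) l%:C.
Proof.
case=> du ul e e0.
have /cvgrPdist_le /(_ e e0) :
    (fun h : R => h^-1 *: (u (h *: (1 : R) + 0) - u 0)) @ 0^' --> l by rewrite -ul.
move=> /(@nbhs_ballP R _ 0) [d d0 Hd]; exists d => // h hd h0.
rewrite -rmorphM -!rmorphB normc_real.
have := Hd h hd (lt0r_neq0 h0).
have -> : h%:A + 0 = h by rewrite addr0; exact: mulr1.
have -> : u h - u 0 - h * l = - (h * (l - h^-1 *: (u h - u 0))).
  by rewrite /GRing.scale /= mulrBr mulrA mulfV ?lt0r_neq0 // mul1r opprB addrC.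
by rewrite normrN normrM gtr0_norm // mulrC ler_pM2r.
Qed.

Lemma is_rderive0_increment {c nu} : is_rderive0 c nu ->
  \forall h \near 0^'+, normc (c h - c 0) <= h * (normc nu + 1).
Proof.
move=> Hc; near=> h.
have h0 : 0 < h by near: h; exact: nbhs_right_gt.
have B : normc (c h - c 0 - h%:C * nu) <= 1 * h by near: h; exact: Hc.
have -> : c h - c 0 = (c h - c 0 - h%:C * nu) + h%:C * nu by ring.
rewrite (le_trans (le_normcD _ _)) // normcM normc_real gtr0_norm //; nra.
Unshelve. all: by end_near. Qed.

Lemma jdiff_normc {f t z a b} : jdiff f t z a b -> forall e : R, 0 < e ->
  exists2 d : R, 0 < d & forall s w, 0 <= s -> `|s - t| < d -> normc (w - z) < d ->
    normc (f s w - f t z - a * (s - t)%:C - b * (w - z))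
      <= e * (`|s - t| + normc (w - z)).
Proof.
move=> J e /J [d [d0 Hd]]; exists d => // s w s0 st wz.
rewrite -lec_normc.
have -> : (e * (`|s - t| + normc (w - z)))%:C = e%:C * (`|s - t|%:C + `|w - z|).
  by rewrite normcE -rmorphD -rmorphM.
by apply: Hd; rewrite ?ltc_normc.
Qed.

Lemma is_rderive0_comp {f t0 z0 p q c nu} {sg : R} :
  0 <= t0 -> 0 <= sg -> jdiff f t0 z0 p q -> is_rderive0 c nu -> c 0 = z0 ->
  is_rderive0 (fun h => f (t0 + h * sg) (c h)) (p * sg%:C + q * nu).
Proof.
move=> t00 sg0 J Hc c0 e e0.
set S := sg + normc nu + 1; set Q := normc q + 1.
have S0 : 0 < S by rewrite /S; have := normc_ge0 nu; lra.
have Q0 : 0 < Q by rewrite /Q; have := normc_ge0 q; lra.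
have eS : 0 < e / (2 * S) by rewrite divr_gt0 ?mulr_gt0.
have [d d0 Hd] := jdiff_normc J _ eS.
have eQ : 0 < e / (2 * Q) by rewrite divr_gt0 ?mulr_gt0.
have incr := is_rderive0_increment Hc; rewrite c0 in incr.
near=> h; rewrite mul0r addr0 c0.
have h0 : 0 < h by near: h; exact: nbhs_right_gt.
have hS : h * S < d.
  by rewrite -ltr_pdivlMr //; near: h; apply: nbhs_right_lt; rewrite divr_gt0.
have Bc : normc (c h - z0 - h%:C * nu) <= e / (2 * Q) * h.
  by rewrite -c0; near: h; exact: Hc.
have Bz : normc (c h - z0) <= h * (normc nu + 1) by near: h; exact: incr.
have nu0 := normc_ge0 nu.
have hsgS : h * sg <= h * S by rewrite ler_pM2l // /S; lra.
have hnuS : h * (normc nu + 1) <= h * S by rewrite ler_pM2l // /S; lra.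
have E : t0 + h * sg - t0 = h * sg by rewrite addrC addKr.
have hsg0 : 0 <= h * sg by rewrite mulr_ge0 // ltW.
have := Hd (t0 + h * sg) (c h); rewrite E ger0_norm // => /(_ (addr_ge0 t00 hsg0)).
move=> /(_ (le_lt_trans hsgS hS) (le_lt_trans (le_trans Bz hnuS) hS)) Bf.
have Bf_half : e / (2 * S) * (h * sg + normc (c h - z0)) <= e * h / 2.
  apply: (le_trans (ler_wpM2l (ltW eS) (_ : _ <= h * S))); first by rewrite /S; lra.
  by rewrite (_ : e / (2 * S) * (h * S) = e * h / 2) //; field; exact: lt0r_neq0.
have Bc_half : normc q * normc (c h - z0 - h%:C * nu) <= e * h / 2.
  apply: (le_trans (ler_wpM2l (normc_ge0 q) Bc)).
  rewrite (_ : e * h / 2 = e / (2 * Q) * Q * h); last by field; exact: lt0r_neq0.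
  by rewrite mulrA ler_pM2r // mulrC ler_wpM2l ?(ltW eQ) // /Q lerDl.
have -> : f (t0 + h * sg) (c h) - f t0 z0 - h%:C * (p * sg%:C + q * nu) =
    (f (t0 + h * sg) (c h) - f t0 z0 - p * (h * sg)%:C - q * (c h - z0))
    + q * (c h - z0 - h%:C * nu) by rewrite rmorphM; ring.
rewrite (le_trans (le_normcD _ _)) // normcM; lra.
Unshelve. all: by end_near. Qed.

Lemma is_dt_rderive0 {f t z a} : is_dt f t z a -> 0 <= t ->
  is_rderive0 (fun h => f (t + h * 1) z) a.
Proof.
move=> H t0 e /H [d [d0 Hd]]; exists d => // h; rewrite /ball /= sub0r normrN.
move=> + h0; rewrite gtr0_norm // mul0r addr0 mulr1 mulrC -lec_normc rmorphM.
have := Hd (t + h) (addr_ge0 t0 (ltW h0)).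
by rewrite addrC addKr gtr0_norm.
Qed.

Lemma is_dz_rderive0 {f t z b} : is_dz f t z b ->
  is_rderive0 (fun h => f (t + h * 0) (z + h%:C * 1)) b.
Proof.
move=> H e /H [d [d0 Hd]]; exists d => // h; rewrite /ball /= sub0r normrN.
move=> + h0; rewrite gtr0_norm // !mulr0 rmorph0 mul0r !addr0 mulr1 mulrC.
rewrite -lec_normc rmorphM.
have := Hd (z + h%:C).
by rewrite addrC addKr normcE normc_real gtr0_norm // ltcR.
Qed.

Lemma jdiff_dt_eq {f t z p q a} : 0 <= t -> jdiff f t z p q -> is_dt f t z a -> p = a.
Proof.
move=> t0 J /is_dt_rderive0 /(_ t0); apply: is_rderive0_unique.
have := is_rderive0_comp t0 ler01 J (is_rderive0_cst z) erefl.
by rewrite rmorph1 mulr1 mulr0 addr0.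
Qed.

Lemma jdiff_dz_eq {f t z p q b} : 0 <= t -> jdiff f t z p q -> is_dz f t z b -> q = b.
Proof.
move=> t0 J /is_dz_rderive0; apply: is_rderive0_unique.
have z0 : z + (0 : R)%:C * 1 = z by rewrite rmorph0 mul0r addr0.
have := is_rderive0_comp t0 (lexx 0) J (is_rderive0_line z 1) z0.
by rewrite rmorph0 mulr0 add0r mulr1.
Qed.

End RightDerivative.

Section InverseFunction.
Context {R : realType} {f g : R -> R[i] -> R[i]} {t d : R} {w p q al be : R[i]}.
Hypotheses (t0 : 0 <= t) (d0 : 0 < d).
Hypotheses (Jf : jdiff f t (g t w) p q) (Jg : jdiff g t w al be).
Hypothesis fgK : forall s w', 0 <= s -> `|s - t| < d -> normc (w' - w) < d ->
  f s (g s w') = w'.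

Lemma jdiff_inverse_dt : p + q * al = 0.
Proof.
have Hg := is_rderive0_comp t0 ler01 Jg (is_rderive0_cst w) erefl.
rewrite rmorph1 mulr1 mulr0 addr0 in Hg.
have g0 : g (t + 0 * 1) w = g t w by rewrite mul0r addr0.
have := is_rderive0_comp t0 ler01 Jf Hg g0.
rewrite rmorph1 mulr1 => /is_rderive0_unique; apply.
apply: (is_rderive0_near_eq _ _ (is_rderive0_cst w)); last first.
  by rewrite mul0r addr0 fgK // subrr ?normr0 ?normc0.
near=> h.
have h0 : 0 < h by near: h; exact: nbhs_right_gt.
apply: fgK.
- by rewrite mulr1 addr_ge0 // ltW.
- by rewrite mulr1 addrC addKr gtr0_norm //; near: h; exact: nbhs_right_lt.
- by rewrite subrr normc0.
Unshelve. all: by end_near. Qed.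

Lemma jdiff_inverse_dz : q * be = 1.
Proof.
have w0 : w + (0 : R)%:C * 1 = w by rewrite rmorph0 mul0r addr0.
have Hg := is_rderive0_comp t0 (lexx 0) Jg (is_rderive0_line w 1) w0.
rewrite rmorph0 mulr0 add0r mulr1 in Hg.
have g0 : g (t + 0 * 0) (w + (0 : R)%:C * 1) = g t w by rewrite mul0r addr0 w0.
have := is_rderive0_comp t0 (lexx 0) Jf Hg g0.
rewrite rmorph0 mulr0 add0r => /is_rderive0_unique; apply.
apply: (is_rderive0_near_eq _ _ (is_rderive0_line w 1)); last first.
  by rewrite g0 mul0r addr0 !w0 fgK // subrr ?normr0 ?normc0.
near=> h.
have h0 : 0 < h by near: h; exact: nbhs_right_gt.
apply: fgK; rewrite ?mulr0 ?addr0 ?subrr ?normr0 //.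
by rewrite mulr1 addrC addKr normc_real gtr0_norm //; near: h; exact: nbhs_right_lt.
Unshelve. all: by end_near. Qed.

End InverseFunction.

(* Along [(s, w') = (t + h, w e^-h)] the argument [w' e^s] of [F] stays at [w e^t]. *)
Lemma jdiff_characteristic {R : realType} {g : R -> R[i] -> R[i]} (F : R[i] -> R[i])
    {t d : R} {w al be : R[i]} :
  0 <= t -> 0 < d -> w != 0 -> jdiff g t w al be ->
  (forall s w', 0 <= s -> `|s - t| < d -> normc (w' - w) < d -> w' != 0 ->
     g s w' = F (w' * (expR s)%:C) - w'^-1) ->
  al - w * be = - w^-1.
Proof.
move=> t0 d0 w0 J gF.
have expRN_rderive0 : is_rderive0 (fun h : R => (expR (- h))%:C) (-1).
  rewrite -(rmorphN1 (real_complex R)); apply: is_rderive0_real.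
  by apply: is_derive_eq; rewrite oppr0 expR0 mul1r.
have expR_rderive0 : is_rderive0 (fun h : R => (expR h)%:C) 1.
  by have := is_rderive0_real (is_derive_expR (0 : R)); rewrite expR0 rmorph1.
have c0 : w * (expR (- 0))%:C = w by rewrite oppr0 expR0 mulr1.
have Hc := is_rderive0_comp t0 ler01 J (is_rderive0_scale w expRN_rderive0) c0.
have gE h : 0 <= h -> h < d -> h * (normc w + 1) < d ->
    g (t + h * 1) (w * (expR (- h))%:C) = - w^-1 * (expR h)%:C + F (w * (expR t)%:C).
  move=> h0 hd hwd; rewrite mulr1 gF.
  - rewrite -mulrA -rmorphM -expRD addrCA addNr addr0 addrC invfM expRN fmorphV invrK.
    by rewrite mulNr.
  - exact: addr_ge0.
  - by rewrite addrC addKr ger0_norm.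
  - have -> : w * (expR (- h))%:C - w = w * (expR (- h) - 1)%:C.
      by rewrite rmorphB rmorph1 mulrBr mulr1.
    have := expR_ge1Dx (- h); have := normc_ge0 w.
    rewrite normcM normc_real ler0_norm ?subr_le0 ?expR_le1 ?oppr_le0 //; nra.
  - by rewrite mulf_neq0 // fmorph_eq0 gt_eqF ?expR_gt0.
have Ht : is_rderive0 (fun h => g (t + h * 1) (w * (expR (- h))%:C)) (- w^-1 * 1).
  apply: (is_rderive0_near_eq _ _
    (is_rderive0_shift _ (is_rderive0_scale (- w^-1) expR_rderive0))).
  - near=> h; apply: gE.
    + by near: h; exact: nbhs_right_ge.
    + by near: h; exact: nbhs_right_lt.
    + rewrite -ltr_pdivlMr ?ltr_pwDr ?normc_ge0 //.
      by near: h; apply: nbhs_right_lt; rewrite divr_gt0 ?ltr_pwDr ?normc_ge0.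
  - by rewrite gE // mul0r.
have := is_rderive0_unique Hc Ht; rewrite rmorph1 !mulr1 => <-; ring.
Unshelve. all: by end_near. Qed.

Section StieltjesTransform.
Context {R : realType}.
Implicit Types (rho : R -> R) (a b : R) (z : R[i]).

Lemma integral_density_weight_gt0 {rho g : R -> R} {C : R} :
  is_prob_density rho -> measurable_fun setT g -> (forall x, 0 < g x) ->
  (forall x, g x <= C) ->
  0 < Rintegral lebesgue_measure setT (fun x => rho x * g x).
Proof.
case=> mrho rho0 rho1 mg g0 gC.
have mf : measurable_fun setT (EFin \o (fun x => rho x * g x)).
  exact/measurableT_comp/measurable_funM.
have mrhoE : measurable_fun setT (EFin \o rho) by exact: measurableT_comp.
rewrite /Rintegral; apply: fine_gt0; apply/andP; split.
- rewrite lt0e integral_ge0 ?andbT => [|x _]; last by rewrite lee_fin mulr_ge0 // ltW.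
  apply/eqP => int0.
  have : ae_eq lebesgue_measure setT (fun x => (rho x)%:E) (cst 0%E).
    have /ae_eq_integral_abs : (\int[lebesgue_measure]_x `|(rho x * g x)%:E| = 0)%E.
      rewrite -int0; apply: eq_integral => x _.
      by rewrite gee0_abs // lee_fin mulr_ge0 // ltW.
    move=> /(_ measurableT mf); apply: filterS => x + _ => /(_ I) /eqP.
    by rewrite eqe mulf_eq0 (gt_eqF (g0 x)) orbF => /eqP ->.
  move=> /(@ae_eq_integral _ _ _ lebesgue_measure setT (cst 0%E) _ measurableT mrhoE
    (measurable_cst _)).
  by rewrite integral0 rho1 => -[] /eqP; rewrite oner_eq0.
- apply: (@le_lt_trans _ _ (\int[lebesgue_measure]_x (C%:E * (rho x)%:E))%E).
    apply: ge0_le_integral => //.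
    - by move=> x _; rewrite lee_fin mulr_ge0 // ltW.
    - exact: measurable_funeM.
    - by move=> x _; rewrite -EFinM lee_fin mulrC ler_wpM2r.
  have C0 : 0 <= C := le_trans (ltW (g0 0)) (gC 0).
  rewrite ge0_integralZl // ?rho1 ?mule1 ?ltey // => x _.
  by rewrite lee_fin.
Qed.

(* Without the usual factor [1/pi]. *)
Definition poisson_kernel (a b x : R) : R := b / ((x - a) ^+ 2 + b ^+ 2).

Lemma poisson_kernel_continuous a b : 0 < b -> continuous (poisson_kernel a b).
Proof.
move=> b0 x; apply: cvgM; first exact: cvg_cst.
apply: cvgV; first by rewrite lt0r_neq0 // ltr_wpDl ?sqr_ge0 ?exprn_gt0.
apply: cvgD; last exact: cvg_cst.
by apply: cvgM; apply: cvgB => //; exact: cvg_cst.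
Qed.

Lemma poisson_kernel_gt0 a b x : 0 < b -> 0 < poisson_kernel a b x.
Proof. by move=> b0; rewrite divr_gt0 // ltr_wpDl ?sqr_ge0 ?exprn_gt0. Qed.

Lemma poisson_kernel_le a b x : 0 < b -> poisson_kernel a b x <= b^-1.
Proof.
move=> b0; rewrite ler_pdivrMr ?ltr_wpDl ?sqr_ge0 ?exprn_gt0 //.
by rewrite mulrC ler_pdivlMr // -expr2 ler_wpDl ?sqr_ge0.
Qed.

Lemma stieltjes_Im rho z : complex.Im (stieltjes rho z) =
  Rintegral lebesgue_measure setT
    (fun x => rho x * poisson_kernel (complex.Re z) (complex.Im z) x).
Proof.
rewrite /stieltjes /= mul0r add0r mul1r add0r.
by congr Rintegral; apply/funext => x; rewrite /poisson_kernel mulrA.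
Qed.

Lemma stieltjes_neq0 rho z : is_prob_density rho -> 0 < complex.Im z ->
  stieltjes rho z != 0.
Proof.
move=> rho_dens z0; apply/eqP => /(congr1 (@complex.Im R)) /eqP.
rewrite stieltjes_Im gt_eqF //; apply: (integral_density_weight_gt0 rho_dens).
- by apply: continuous_measurable_fun; exact: poisson_kernel_continuous.
- by move=> x; exact: poisson_kernel_gt0.
- by move=> x; exact: poisson_kernel_le.
Qed.

End StieltjesTransform.

Theorem proposition1 (R : realType) (R0 : R[i] -> R[i])
  (rho : R -> R -> R) (m omega : R -> R[i] -> R[i]) (D : R -> R[i] -> Prop)
  (Hrho : forall t, 0 <= t -> is_prob_density (rho t))
  (Hm : forall t z, 0 <= t -> 0 < complex.Im z -> m t z = stieltjes (rho t) z)
  (HD : forall t w, D t w -> 0 <= t /\ exists d : R, 0 < d /\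
          forall s w', 0 <= s -> `|s - t| < d -> `|w' - w| < d%:C -> D s w')
  (Hinv : forall t w, D t w -> 0 < complex.Im (omega t w) /\ m t (omega t w) = w)
  (HR : forall t z, D t (- z) -> z != 0 ->
          Rtransform (omega t) z = R0 (z * (expR t)%:C))
  (Hmdiff : forall t z, 0 <= t -> 0 < complex.Im z -> exists a b, jdiff m t z a b)
  (Hodiff : forall t w, D t w -> exists a b, jdiff omega t w a b) :
  forall t w, D t w ->
    forall a b, is_dt m t (omega t w) a -> is_dz m t (omega t w) b ->
      a = - m t (omega t w) + (m t (omega t w))^-1 * b.
Proof.
move=> t w Dtw a b Hdt Hdz.
have [t0 [d [d0 near_D]]] := HD t w Dtw.
have [Imz mz] := Hinv t w Dtw.
have w0 : w != 0 by rewrite -mz Hm //; apply: stieltjes_neq0 => //; exact: Hrho.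
have D_near s w' : 0 <= s -> `|s - t| < d -> normc (w' - w) < d -> D s w'.
  by move=> s0 st ww; apply: near_D; rewrite ?ltc_normc.
have mK s w' : 0 <= s -> `|s - t| < d -> normc (w' - w) < d -> m s (omega s w') = w'.
  by move=> s0 st ww; have [_ ->] := Hinv s w' (D_near s w' s0 st ww).
have omegaE s w' : 0 <= s -> `|s - t| < d -> normc (w' - w) < d -> w' != 0 ->
    omega s w' = R0 (- (w' * (expR s)%:C)) - w'^-1.
  move=> s0 st ww w'0; have := HR s (- w').
  rewrite opprK => /(_ (D_near s w' s0 st ww)).
  by rewrite oppr_eq0 /Rtransform opprK invrN mulNr => /(_ w'0) <-; rewrite opprK addrK.
have [p [q Jm]] := Hmdiff t (omega t w) t0 Imz.
have [al [be Jo]] := Hodiff t w Dtw.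
rewrite mz -(jdiff_dt_eq t0 Jm Hdt) -(jdiff_dz_eq t0 Jm Hdz).
have m_dt := jdiff_inverse_dt t0 d0 Jm Jo mK.
have m_dz := jdiff_inverse_dz t0 d0 Jm Jo mK.
have omega_char := jdiff_characteristic (fun u => R0 (- u)) t0 d0 w0 Jo omegaE.
have -> : p = - (q * al) by apply/eqP; rewrite -subr_eq0 opprK m_dt.
have -> : al = w * be - w^-1 by rewrite -[al](subrK (w * be)) omega_char addrC.
by transitivity (- (w * (q * be)) + w^-1 * q); [ring | rewrite m_dz mulr1].
Qed.
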